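(* Let $N\ge 3$, $a>0$, $T>0$, and let $u,v\in C^{2,1}([a,\infty)\times[0,T))$ be two classical solutions of $$w_t=w_{rr}+\frac{N+1}{r}w_r+(Nw+rw_r)w,\qquad (r,t)\in[a,\infty)\times[0,T).$$ Assume $u(r,0)<v(r,0)$ for $r\in[a,\infty)$, $u(a,t)<v(a,t)$ for $t\in[0,T)$, and that $u$, $v$, $rv_r$ are uniformly bounded in $[a,\infty)\times[0,T)$. Then $u(r,t)<v(r,t)$ for all $(r,t)\in[a,\infty)\times[0,T)$. *)

From Stdlib Require Import Reals.
Open Scope R_scope.

Definition dom (a T : R) (r t : R) : Prop := a <= r /\ 0 <= t < T.

(* l is the derivative of f at x relative to the set D (one-sided at
   boundary points of D): difference quotients converge to l as y -> x, y in D. *)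
Definition deriv_within (D : R -> Prop) (f : R -> R) (x l : R) : Prop :=
  limit1_in (fun y => (f y - f x) / (y - x)) (fun y => D y /\ y <> x) l x.

Definition cont_on_dom (a T : R) (g : R -> R -> R) : Prop :=
  forall r t, dom a T r t ->
  forall eps, 0 < eps -> exists delta, 0 < delta /\
    forall r' t', dom a T r' t' -> Rabs (r' - r) < delta -> Rabs (t' - t) < delta ->
      Rabs (g r' t' - g r t) < eps.

Definition C21 (a T : R) (u ur urr ut : R -> R -> R) : Prop :=
  cont_on_dom a T u /\ cont_on_dom a T ur /\ cont_on_dom a T urr /\ cont_on_dom a T ut /\
  (forall r t, dom a T r t ->
     deriv_within (fun s => a <= s) (fun s => u s t) r (ur r t) /\
     deriv_within (fun s => a <= s) (fun s => ur s t) r (urr r t) /\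
     deriv_within (fun s => 0 <= s < T) (fun s => u r s) t (ut r t)).

Definition classical_solution (N : nat) (a T : R) (u ur urr ut : R -> R -> R) : Prop :=
  C21 a T u ur urr ut /\
  forall r t, dom a T r t ->
    ut r t = urr r t + (INR N + 1) / r * ur r t + (INR N * u r t + r * ur r t) * u r t.

(* The difference z = v - u solves the linear equation
   z_t = z_rr + beta z_r + gamma z, with beta = (N+1)/r + r u and
   gamma = N (u + v) + r v_r; the bounds on u, v and r v_r bound gamma, and
   beta on bounded r-intervals.  On a rectangle [a,b] x [0,t1] a weak minimum
   principle applies to e^(-lam t) z + psi as soon as lam > gamma and the barrier
   psi is a supersolution of the weighted operator.  With the quadratic barrier
   del (1 + r^2 + C t) and b so large that it dominates the bounded z at r = b,
   a negative value of z at a given point is impossible once del is small, so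
   z >= 0.  Strictness then comes from the convex barrier
   -eps (e^(-al r) - e^(-al b)), negative inside and zero at r = b, where z >= 0
   is already known. *)

From Stdlib Require Import Reals Lra Classical.
From Coquelicot Require Import Coquelicot.
Open Scope R_scope.

Lemma exp_le_exp x y : x <= y -> exp x <= exp y.
Proof.
  intros Hxy. destruct (Req_dec x y) as [->|Hne]; [lra|].
  left. apply exp_increasing. lra.
Qed.

Lemma derivable_pt_lim_exp_scal k x : derivable_pt_lim (fun t => exp (k * t)) x (k * exp (k * x)).
Proof. apply is_derive_Reals. auto_derive; [easy| ring]. Qed.

Lemma deriv_within_derivable_pt_lim D f x l d :
  0 < d -> (forall y, Rabs (y - x) < d -> D y) ->
  deriv_within D f x l -> derivable_pt_lim f x l.
Proof.
  intros Hd HD Hf eps Heps.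
  destruct (Hf eps Heps) as [alp [Halp Hl]].
  exists (mkposreal _ (Rmin_pos _ _ Halp Hd)). intros h Hh0 Hh. simpl in Hh.
  assert (Hh1 : Rabs h < alp) by (eapply Rlt_le_trans; [exact Hh| apply Rmin_l]).
  assert (Hh2 : Rabs h < d) by (eapply Rlt_le_trans; [exact Hh| apply Rmin_r]).
  assert (Hxh : x + h - x = h) by ring.
  specialize (Hl (x + h)). simpl in Hl. unfold R_dist in Hl. rewrite Hxh in Hl.
  apply Hl. repeat split; auto.
  - apply HD. rewrite Hxh. exact Hh2.
  - intro E. apply Hh0. lra.
Qed.

Lemma derivable_pt_lim_pos_left f x l :
  derivable_pt_lim f x l -> 0 < l ->
  exists d, 0 < d /\ forall y, x - d < y < x -> f y < f x.
Proof.
  intros Hf Hl. destruct (Hf (l / 2)) as [d Hd]; [lra|].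
  exists d. split; [apply cond_pos|]. intros y Hy.
  specialize (Hd (y - x)). replace (x + (y - x)) with y in Hd by ring.
  assert (Q : Rabs ((f y - f x) / (y - x) - l) < l / 2).
  { apply Hd; [lra|]. rewrite Rabs_left; lra. }
  apply Rabs_def2 in Q.
  assert (Hq : f y - f x = (f y - f x) / (y - x) * (y - x)) by (field; lra).
  nra.
Qed.

Lemma local_min_derivable_pt_lim_0 f x l p q :
  p < x < q -> (forall y, p < y < q -> f x <= f y) ->
  derivable_pt_lim f x l -> l = 0.
Proof.
  intros Hx Hmin Hf.
  rewrite <- (derive_pt_eq_0 f x l (exist _ l Hf) Hf).
  apply (deriv_minimum f p q); try lra. intros y Hy1 Hy2. apply Hmin. lra.
Qed.

Lemma local_min_second_derivative_nonneg f f' x l p q :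
  p < x < q -> (forall y, p < y < q -> f x <= f y) ->
  (forall y, p < y < q -> derivable_pt_lim f y (f' y)) ->
  derivable_pt_lim f' x l -> 0 <= l.
Proof.
  intros Hx Hmin Hf Hf'.
  assert (H0 : f' x = 0) by exact (local_min_derivable_pt_lim_0 f x _ p q Hx Hmin (Hf x Hx)).
  apply Rnot_lt_le. intro Hl.
  (* if f''(x) < 0 then f' > 0 just left of x, where f is thus below f(x) *)
  destruct (derivable_pt_lim_pos_left (- f')%F x (- l) (derivable_pt_lim_opp _ _ _ Hf'))
    as [d [Hd Hleft]]; [lra|].
  set (y := Rmax (x - d / 2) ((p + x) / 2)).
  assert (Hy : p < y < x /\ x - d < y) by (unfold y, Rmax; destruct Rle_dec; lra).
  destruct (MVT_cor2 f f' y x) as [c [Hc1 Hc2]]; [lra| intros c Hc; apply Hf; lra|].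
  assert (Hc : 0 < f' c) by (specialize (Hleft c ltac:(lra)); unfold opp_fct in Hleft; lra).
  specialize (Hmin y ltac:(lra)). nra.
Qed.

Definition cont_on (P : R -> R -> Prop) (f : R -> R -> R) : Prop :=
  forall r t, P r t ->
  forall eps, 0 < eps -> exists delta, 0 < delta /\
    forall r' t', P r' t' -> Rabs (r' - r) < delta -> Rabs (t' - t) < delta ->
      Rabs (f r' t' - f r t) < eps.

Lemma cont_onP P f :
  cont_on P f <-> forall r t, P r t ->
    filterlim (fun p => f (fst p) (snd p))
      (within (fun p => P (fst p) (snd p)) (locally (r, t))) (locally (f r t)).
Proof.
  split.
  - intros Hf r t Hp. apply filterlim_locally. intros eps.
    destruct (Hf r t Hp eps (cond_pos eps)) as [d [Hd H]].
    exists (mkposreal d Hd). intros [r' t'] [Hr Ht] Hp'. exact (H r' t' Hp' Hr Ht).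
  - intros Hf r t Hp eps Heps.
    destruct (proj1 (filterlim_locally _ _) (Hf r t Hp) (mkposreal eps Heps)) as [d H].
    exists d. split; [apply cond_pos|].
    intros r' t' Hp' Hr Ht. exact (H (r', t') (conj Hr Ht) Hp').
Qed.

Lemma cont_on_sub (P Q : R -> R -> Prop) f :
  (forall r t, Q r t -> P r t) -> cont_on P f -> cont_on Q f.
Proof.
  intros HQP Hf r t Hq eps Heps. destruct (Hf r t (HQP r t Hq) eps Heps) as [d [Hd H]].
  exists d. split; auto.
Qed.

Lemma cont_on_plus P f g :
  cont_on P f -> cont_on P g -> cont_on P (fun r t => f r t + g r t).
Proof.
  rewrite !cont_onP. intros Hf Hg r t Hp.
  exact (filterlim_comp_2 _ _ Rplus (Hf r t Hp) (Hg r t Hp) (filterlim_plus _ _)).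
Qed.

Lemma cont_on_opp P f : cont_on P f -> cont_on P (fun r t => - f r t).
Proof.
  rewrite !cont_onP. intros Hf r t Hp.
  eapply filterlim_comp; [exact (Hf r t Hp)| exact (filterlim_opp _)].
Qed.

Lemma cont_on_mult P f g :
  cont_on P f -> cont_on P g -> cont_on P (fun r t => f r t * g r t).
Proof.
  rewrite !cont_onP. intros Hf Hg r t Hp.
  exact (filterlim_comp_2 _ _ Rmult (Hf r t Hp) (Hg r t Hp) (filterlim_mult _ _)).
Qed.

Lemma cont_on_continuous P f :
  (forall r t, continuous (fun p : R * R => f (fst p) (snd p)) (r, t)) -> cont_on P f.
Proof.
  intros Hf. apply cont_onP. intros r t _.
  exact (filterlim_filter_le_1 _ (filter_le_within _) (Hf r t)).
Qed.

Lemma cont_on_fun_r P g : (forall x, ex_derive g x) -> cont_on P (fun r _ => g r).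
Proof.
  intros Hg. apply cont_on_continuous. intros r t.
  apply (continuous_comp fst g); [apply continuous_fst| apply ex_derive_continuous, Hg].
Qed.

Lemma cont_on_fun_t P g : (forall x, ex_derive g x) -> cont_on P (fun _ t => g t).
Proof.
  intros Hg. apply cont_on_continuous. intros r t.
  apply (continuous_comp snd g); [apply continuous_snd| apply ex_derive_continuous, Hg].
Qed.

Definition rect (a b t1 r t : R) : Prop := a <= r <= b /\ 0 <= t <= t1.

Lemma segment_min a b g :
  a <= b ->
  (forall c, a <= c <= b -> forall eps, 0 < eps -> exists d, 0 < d /\
     forall x, a <= x <= b -> Rabs (x - c) < d -> Rabs (g x - g c) < eps) ->
  exists m, a <= m <= b /\ forall x, a <= x <= b -> g m <= g x.
Proof.
  intros Hab Hg.
  (* extend g to a continuous function on R by clamping its argument into [a, b] *)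
  set (cl x := Rmax a (Rmin b x)).
  assert (Hcl_in : forall x, a <= cl x <= b)
    by (intro x; unfold cl, Rmax, Rmin; repeat destruct Rle_dec; lra).
  assert (Hcl_id : forall x, a <= x <= b -> cl x = x)
    by (intros x Hx; unfold cl, Rmax, Rmin; repeat destruct Rle_dec; lra).
  assert (Hcl_dist : forall x c, a <= c <= b -> Rabs (cl x - c) <= Rabs (x - c))
    by (intros x c Hc; unfold cl, Rmax, Rmin; repeat destruct Rle_dec; split_Rabs; lra).
  destruct (continuity_ab_min (fun x => g (cl x)) a b Hab) as [m [Hm Hmab]].
  - intros c Hc eps Heps. destruct (Hg c Hc eps Heps) as [d [Hd H]].
    exists d. split; auto. intros x [_ Hx]. simpl in *. unfold R_dist in *.
    rewrite (Hcl_id c Hc). apply H; [apply Hcl_in|].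
    eapply Rle_lt_trans; [apply Hcl_dist|]; auto.
  - exists m. split; auto. intros x Hx. specialize (Hm x Hx). rewrite !Hcl_id in Hm; auto.
Qed.

Lemma rect_min_r a b t1 w t :
  a <= b -> 0 <= t <= t1 -> cont_on (rect a b t1) w ->
  exists rm, a <= rm <= b /\ forall r, a <= r <= b -> w rm t <= w r t.
Proof.
  intros Hab Ht Hw. apply (segment_min a b (fun r => w r t) Hab).
  intros c Hc eps Heps. destruct (Hw c t (conj Hc Ht) eps Heps) as [d [Hd H]].
  exists d. split; auto. intros x Hx Hxc.
  apply H; [split; auto| auto| rewrite Rminus_diag, Rabs_R0; auto].
Qed.

Lemma rect_min_t a b t1 w r :
  0 <= t1 -> a <= r <= b -> cont_on (rect a b t1) w ->
  exists tm, 0 <= tm <= t1 /\ forall t, 0 <= t <= t1 -> w r tm <= w r t.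
Proof.
  intros Ht1 Hr Hw. apply (segment_min 0 t1 (fun t => w r t) Ht1).
  intros c Hc eps Heps. destruct (Hw r c (conj Hr Hc) eps Heps) as [d [Hd H]].
  exists d. split; auto. intros x Hx Hxc.
  apply H; [split; auto| rewrite Rminus_diag, Rabs_R0; auto| auto].
Qed.

Lemma segment_uniform (a b : R) (Q : R -> R -> Prop) :
  a <= b ->
  (forall d d' x, 0 < d' <= d -> Q d x -> Q d' x) ->
  (forall c, a <= c <= b -> exists d, 0 < d /\
     forall x, a <= x <= b -> Rabs (x - c) < d -> Q d x) ->
  exists d, 0 < d /\ forall x, a <= x <= b -> Q d x.
Proof.
  intros Hab Hmono Hloc.
  set (E y := a <= y <= b /\ exists d, 0 < d /\ forall x, a <= x <= y -> Q d x).
  assert (Ea : E a).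
  { destruct (Hloc a) as [d [Hd H]]; [lra|]. split; [lra|].
    exists d. split; auto. intros x Hx. apply H; [lra|].
    replace (x - a) with 0 by lra. rewrite Rabs_R0. exact Hd. }
  destruct (completeness E) as [rho [Hub Hlub]];
    [exists b; intros y [Hy _]; lra| exists a; exact Ea|].
  assert (Hrho : a <= rho <= b) by (split; [apply Hub, Ea| apply Hlub; intros y [Hy _]; lra]).
  destruct (Hloc rho Hrho) as [d0 [Hd0 H0]].
  assert (Hx : exists x, E x /\ rho - d0 < x).
  { apply NNPP. intro Hn. enough (rho <= rho - d0) by lra.
    apply Hlub. intros x Ex. apply Rnot_lt_le. intro. apply Hn. exists x. auto. }
  destruct Hx as [x [[Hxab [dx [Hdx Hx]]] Hxrho]].
  set (y := Rmin b (rho + d0 / 2)).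
  assert (Hyb : y <= b) by apply Rmin_l.
  assert (Hyr : y <= rho + d0 / 2) by apply Rmin_r.
  assert (Ey : E y).
  { split; [unfold y, Rmin; destruct Rle_dec; lra|].
    assert (Hd : 0 < Rmin dx d0) by (apply Rmin_pos; auto).
    exists (Rmin dx d0). split; auto. intros z Hz. destruct (Rle_dec z x).
    - apply (Hmono dx); [split; [auto| apply Rmin_l]| apply Hx; lra].
    - apply (Hmono d0); [split; [auto| apply Rmin_r]|].
      apply H0; [lra| split_Rabs; lra]. }
  assert (Hy : y <= rho) by (apply Hub, Ey).
  unfold y, Rmin in Ey, Hy. destruct Rle_dec; [|lra].
  destruct Ey as [_ [d [Hd Hd']]]. exists d. split; auto.
Qed.

Lemma rect_above_persists a b t1 w m s :
  a <= b -> 0 <= s <= t1 -> cont_on (rect a b t1) w ->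
  (forall r, a <= r <= b -> m < w r s) ->
  exists d, 0 < d /\ forall r t, a <= r <= b -> 0 <= t <= t1 -> Rabs (t - s) < d -> m < w r t.
Proof.
  intros Hab Hs Hw Hm.
  destruct (segment_uniform a b
      (fun d r => forall t, 0 <= t <= t1 -> Rabs (t - s) < d -> m < w r t) Hab)
    as [d [Hd H]].
  - intros d d' r Hd' H t Ht Hts. apply H; auto. lra.
  - intros c Hc. specialize (Hm c Hc).
    destruct (Hw c s (conj Hc Hs) (w c s - m)) as [d [Hd H]]; [lra|].
    exists d. split; auto. intros r Hr Hrc t Ht Hts.
    specialize (H r t (conj Hr Ht) Hrc Hts). apply Rabs_def2 in H. lra.
  - exists d. split; auto.
Qed.

Lemma rect_first_time_below a b t1 w m r0 t0 :
  a <= b -> cont_on (rect a b t1) w ->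
  (forall r, a <= r <= b -> m < w r 0) ->
  a <= r0 <= b -> 0 <= t0 <= t1 -> w r0 t0 <= m ->
  exists s, 0 < s <= t0 /\ (exists r, a <= r <= b /\ w r s <= m) /\
    forall t r, 0 <= t < s -> a <= r <= b -> m < w r t.
Proof.
  intros Hab Hw Hinit Hr0 Ht0 Hwm.
  set (E x := 0 <= x <= t0 /\ forall t r, 0 <= t <= x -> a <= r <= b -> m < w r t).
  assert (E0 : E 0).
  { split; [lra|]. intros t r Ht Hr. replace t with 0 by lra. auto. }
  destruct (completeness E) as [s [Hub Hlub]];
    [exists t0; intros x [Hx _]; lra| exists 0; exact E0|].
  assert (Hs : 0 <= s <= t0) by (split; [apply Hub, E0| apply Hlub; intros x [Hx _]; lra]).
  assert (Hbefore : forall t r, 0 <= t < s -> a <= r <= b -> m < w r t).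
  { intros t r Ht Hr. assert (Hx : exists x, E x /\ t < x).
    { apply NNPP. intro Hn. enough (s <= t) by lra.
      apply Hlub. intros x Ex. apply Rnot_lt_le. intro. apply Hn. exists x. auto. }
    destruct Hx as [x [[_ Hx] Htx]]. apply Hx; auto. lra. }
  assert (Hbelow : exists r, a <= r <= b /\ w r s <= m).
  { apply NNPP. intro Hn.
    assert (Hall : forall r, a <= r <= b -> m < w r s).
    { intros r Hr. apply Rnot_le_lt. intro. apply Hn. exists r. auto. }
    destruct (rect_above_persists a b t1 w m s) as [d [Hd Hpers]]; auto; [lra|].
    set (y := Rmin t0 (s + d / 2)).
    assert (Hyt : y <= t0) by apply Rmin_l.
    assert (Hys : y <= s + d / 2) by apply Rmin_r.
    assert (Ey : E y).
    { split; [unfold y, Rmin; destruct Rle_dec; lra|].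
      intros t r Ht Hr. destruct (Rlt_dec t s).
      - apply Hbefore; auto. lra.
      - apply Hpers; auto; [lra| split_Rabs; lra]. }
    assert (Hy : y <= s) by (apply Hub, Ey).
    unfold y, Rmin in Hy. destruct Rle_dec in Hy; [|lra].
    specialize (Hall r0 Hr0). replace s with t0 in Hall by lra. lra. }
  exists s. repeat split; auto; try lra.
  destruct (Req_dec s 0) as [Hs0|]; [|lra].
  destruct Hbelow as [r [Hr Hwr]]. rewrite Hs0 in Hwr. specialize (Hinit r Hr). lra.
Qed.

Lemma rect_min_principle a b t1 (w wr wrr wt : R -> R -> R) :
  a < b -> cont_on (rect a b t1) w ->
  (forall r t, a < r < b -> 0 < t <= t1 ->
     derivable_pt_lim (fun s => w s t) r (wr r t) /\
     derivable_pt_lim (fun s => wr s t) r (wrr r t) /\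
     derivable_pt_lim (fun s => w r s) t (wt r t)) ->
  (forall r t, rect a b t1 r t -> t = 0 \/ r = a \/ r = b -> 0 <= w r t) ->
  (forall r t, a < r < b -> 0 < t <= t1 ->
     w r t < 0 -> wr r t = 0 -> 0 <= wrr r t -> 0 < wt r t) ->
  forall r t, rect a b t1 r t -> 0 <= w r t.
Proof.
  intros Hab Hw Hder Hbd Hsign r0 t0 [Hr0 Ht0]. apply Rnot_lt_le. intro Hneg.
  destruct (rect_first_time_below a b t1 w (w r0 t0) r0 t0)
    as [s [Hs [[r1 [Hr1 Hw1]] Hbefore]]]; auto; try lra.
  { intros r Hr. assert (0 <= w r 0) by (apply Hbd; [split; lra| auto]). lra. }
  destruct (rect_min_r a b t1 w s) as [rs [Hrs Hmin]]; auto; try lra.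
  assert (Hws : w rs s <= w r0 t0) by (specialize (Hmin r1 Hr1); lra).
  assert (Hint : a < rs < b).
  { assert (Hnot : ~ (s = 0 \/ rs = a \/ rs = b)).
    { intro H. assert (0 <= w rs s) by (apply Hbd; [split; lra| exact H]). lra. }
    lra. }
  assert (Hs1 : 0 < s <= t1) by lra.
  assert (Hmin' : forall y, a < y < b -> w rs s <= w y s) by (intros y Hy; apply Hmin; lra).
  destruct (Hder rs s Hint Hs1) as [Dr [Drr Dt]].
  assert (Hwr := local_min_derivable_pt_lim_0 _ _ _ a b Hint Hmin' Dr).
  assert (Hwrr := local_min_second_derivative_nonneg _ (fun y => wr y s) _ _ a b Hint Hmin'
                    (fun y Hy => proj1 (Hder y s Hy Hs1)) Drr).
  destruct (derivable_pt_lim_pos_left _ _ _ Dt (Hsign rs s Hint Hs1 ltac:(lra) Hwr Hwrr))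
    as [d [Hd Hleft]].
  set (t := Rmax (s - d / 2) (s / 2)).
  assert (Ht : s - d < t < s /\ 0 <= t) by (unfold t, Rmax; destruct Rle_dec; lra).
  specialize (Hleft t ltac:(lra)). specialize (Hbefore t rs ltac:(lra) ltac:(lra)). lra.
Qed.

Lemma linear_barrier_comparison a b t1 lam
    (Z Zr Zrr Zt beta gamma psi psir psirr psit : R -> R -> R) :
  a < b -> cont_on (rect a b t1) Z -> cont_on (rect a b t1) psi ->
  (forall r t, a < r < b -> 0 < t <= t1 ->
     derivable_pt_lim (fun s => Z s t) r (Zr r t) /\
     derivable_pt_lim (fun s => Zr s t) r (Zrr r t) /\
     derivable_pt_lim (fun s => Z r s) t (Zt r t)) ->
  (forall r t, a < r < b -> 0 < t <= t1 ->
     derivable_pt_lim (fun s => psi s t) r (psir r t) /\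
     derivable_pt_lim (fun s => psir s t) r (psirr r t) /\
     derivable_pt_lim (fun s => psi r s) t (psit r t)) ->
  (forall r t, a < r < b -> 0 < t <= t1 ->
     Zt r t = Zrr r t + beta r t * Zr r t + gamma r t * Z r t) ->
  (forall r t, a < r < b -> 0 < t <= t1 -> gamma r t < lam) ->
  (forall r t, a < r < b -> 0 < t <= t1 ->
     0 <= psit r t - psirr r t - beta r t * psir r t + (lam - gamma r t) * psi r t) ->
  (forall r t, rect a b t1 r t -> t = 0 \/ r = a \/ r = b ->
     0 <= exp (- lam * t) * Z r t + psi r t) ->
  forall r t, rect a b t1 r t -> 0 <= exp (- lam * t) * Z r t + psi r t.
Proof.
  intros Hab HZ Hpsi HZd Hpsid Heq Hgamma Hbarrier Hbd.
  apply (rect_min_principle a b t1 _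
           (fun r t => exp (- lam * t) * Zr r t + psir r t)
           (fun r t => exp (- lam * t) * Zrr r t + psirr r t)
           (fun r t => - lam * exp (- lam * t) * Z r t + exp (- lam * t) * Zt r t + psit r t));
    auto.
  - apply cont_on_plus; auto. apply cont_on_mult; auto.
    apply cont_on_fun_t. intro x. auto_derive. easy.
  - intros r t Hr Ht.
    destruct (HZd r t Hr Ht) as [Z1 [Z2 Z3]]. destruct (Hpsid r t Hr Ht) as [P1 [P2 P3]].
    repeat split.
    + exact (derivable_pt_lim_plus _ _ _ _ _ (derivable_pt_lim_scal _ _ _ _ Z1) P1).
    + exact (derivable_pt_lim_plus _ _ _ _ _ (derivable_pt_lim_scal _ _ _ _ Z2) P2).
    + exact (derivable_pt_lim_plus _ _ _ _ _
               (derivable_pt_lim_mult _ _ _ _ _ (derivable_pt_lim_exp_scal (- lam) t) Z3) P3).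
  - intros r t Hr Ht Hw Hwr Hwrr.
    rewrite (Heq r t Hr Ht).
    specialize (Hgamma r t Hr Ht). specialize (Hbarrier r t Hr Ht).
    set (E := exp (- lam * t)) in *.
    set (W := E * Z r t + psi r t) in *.
    (* W_t = W_rr + beta W_r + (gamma - lam) W + (the nonnegative barrier expression) *)
    assert (Hid : - lam * E * Z r t + E * (Zrr r t + beta r t * Zr r t + gamma r t * Z r t)
                  + psit r t
                = (E * Zrr r t + psirr r t) + beta r t * (E * Zr r t + psir r t)
                  + (lam - gamma r t) * (- W)
                  + (psit r t - psirr r t - beta r t * psir r t + (lam - gamma r t) * psi r t))
      by (unfold W; ring).
    rewrite Hid, Hwr.
    assert (0 < (lam - gamma r t) * (- W)) by (apply Rmult_lt_0_compat; lra).
    lra.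
Qed.

Lemma C21_interior_derivatives a T u ur urr ut r t :
  C21 a T u ur urr ut -> a < r -> 0 < t < T ->
  derivable_pt_lim (fun s => u s t) r (ur r t) /\
  derivable_pt_lim (fun s => ur s t) r (urr r t) /\
  derivable_pt_lim (fun s => u r s) t (ut r t).
Proof.
  intros [_ [_ [_ [_ Hd]]]] Hr Ht.
  destruct (Hd r t ltac:(split; lra)) as [D1 [D2 D3]].
  assert (Hnr : forall y, Rabs (y - r) < r - a -> a <= y) by (intros y Hy; split_Rabs; lra).
  assert (Hnt : forall y, Rabs (y - t) < Rmin t (T - t) -> 0 <= y < T).
  { intros y Hy. assert (Rmin t (T - t) <= t) by apply Rmin_l.
    assert (Rmin t (T - t) <= T - t) by apply Rmin_r. split_Rabs; lra. }
  split; [|split].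
  - exact (deriv_within_derivable_pt_lim _ _ _ _ (r - a) ltac:(lra) Hnr D1).
  - exact (deriv_within_derivable_pt_lim _ _ _ _ (r - a) ltac:(lra) Hnr D2).
  - exact (deriv_within_derivable_pt_lim _ _ _ _ (Rmin t (T - t))
             ltac:(apply Rmin_pos; lra) Hnt D3).
Qed.

Section TwoSolutions.

Variables (N : nat) (a T M : R) (u ur urr ut v vr vrr vt : R -> R -> R).
Hypotheses (Ha : 0 < a) (HT : 0 < T)
  (Hu : classical_solution N a T u ur urr ut) (Hv : classical_solution N a T v vr vrr vt)
  (HM : forall r t, dom a T r t ->
     Rabs (u r t) <= M /\ Rabs (v r t) <= M /\ Rabs (r * vr r t) <= M).

(* lam exceeds the reaction coefficient N (u + v) + r v_r by at least 2 M + 1;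
   the margin absorbs the term -2 r^2 u of the quadratic barrier. *)
Let lam := 2 * INR N * M + 3 * M + 1.

Lemma difference_cont_on b t1 : t1 < T -> cont_on (rect a b t1) (fun r t => v r t - u r t).
Proof.
  intros Ht1. apply (cont_on_sub (dom a T)); [intros r t [Hr Ht]; split; lra|].
  exact (cont_on_plus _ _ _ (proj1 (proj1 Hv)) (cont_on_opp _ _ (proj1 (proj1 Hu)))).
Qed.

Lemma difference_equation r t : dom a T r t ->
  vt r t - ut r t = (vrr r t - urr r t) + ((INR N + 1) / r + r * u r t) * (vr r t - ur r t)
    + (INR N * (u r t + v r t) + r * vr r t) * (v r t - u r t).
Proof.
  intros Hd. rewrite (proj2 Hu r t Hd), (proj2 Hv r t Hd). destruct Hd. field. lra.
Qed.

Lemma bound_nonneg : 0 <= M.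
Proof.
  destruct (HM a 0) as [H _]; [split; lra|]. pose proof (Rabs_pos (u a 0)). lra.
Qed.

Lemma coefficient_bounds r t : dom a T r t ->
  - M <= u r t <= M /\ - M <= v r t <= M /\
  - lam <= INR N * (u r t + v r t) + r * vr r t /\
  INR N * (u r t + v r t) + r * vr r t + 2 * M + 1 <= lam.
Proof.
  intros Hd. destruct (HM r t Hd) as [Hu' [Hv' Hvr']].
  apply Rabs_le_between in Hu', Hv', Hvr'.
  pose proof (pos_INR N). pose proof bound_nonneg. unfold lam.
  repeat split; try lra; nra.
Qed.

Lemma barrier_comparison b t1 (psi psir psirr psit : R -> R -> R) :
  a < b -> t1 < T -> cont_on (rect a b t1) psi ->
  (forall r t, a < r < b -> 0 < t <= t1 ->
     derivable_pt_lim (fun s => psi s t) r (psir r t) /\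
     derivable_pt_lim (fun s => psir s t) r (psirr r t) /\
     derivable_pt_lim (fun s => psi r s) t (psit r t)) ->
  (forall r t, a < r < b -> 0 < t <= t1 ->
     0 <= psit r t - psirr r t - ((INR N + 1) / r + r * u r t) * psir r t
          + (lam - (INR N * (u r t + v r t) + r * vr r t)) * psi r t) ->
  (forall r t, rect a b t1 r t -> t = 0 \/ r = a \/ r = b ->
     0 <= exp (- lam * t) * (v r t - u r t) + psi r t) ->
  forall r t, rect a b t1 r t -> 0 <= exp (- lam * t) * (v r t - u r t) + psi r t.
Proof.
  intros Hab Ht1 Hpsi Hpsid Hbarrier Hbd.
  apply (linear_barrier_comparison a b t1 lam (fun r t => v r t - u r t)
           (fun r t => vr r t - ur r t) (fun r t => vrr r t - urr r t)
           (fun r t => vt r t - ut r t) (fun r t => (INR N + 1) / r + r * u r t)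
           (fun r t => INR N * (u r t + v r t) + r * vr r t) psi psir psirr psit);
    auto.
  - apply difference_cont_on, Ht1.
  - intros r t Hr Ht.
    destruct (C21_interior_derivatives _ _ _ _ _ _ r t (proj1 Hu)) as [U1 [U2 U3]]; try lra.
    destruct (C21_interior_derivatives _ _ _ _ _ _ r t (proj1 Hv)) as [V1 [V2 V3]]; try lra.
    repeat split.
    + exact (derivable_pt_lim_minus _ _ _ _ _ V1 U1).
    + exact (derivable_pt_lim_minus _ _ _ _ _ V2 U2).
    + exact (derivable_pt_lim_minus _ _ _ _ _ V3 U3).
  - intros r t Hr Ht. apply difference_equation. split; lra.
  - intros r t Hr Ht. destruct (coefficient_bounds r t) as [_ [_ [_ H]]]; [split; lra|].
    pose proof bound_nonneg. lra.
Qed.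

Lemma quadratic_barrier_supersolution del r t : 0 <= del -> dom a T r t ->
  0 <= del * (2 * INR N + 4) - del * 2 - ((INR N + 1) / r + r * u r t) * (del * (2 * r))
       + (lam - (INR N * (u r t + v r t) + r * vr r t))
         * (del * (1 + r * r) + del * (2 * INR N + 4) * t).
Proof.
  intros Hdel Hd. pose proof (Hd) as [Hr Ht].
  destruct (coefficient_bounds r t Hd) as [[_ Hu1] [_ [_ Hgam]]].
  pose proof bound_nonneg. pose proof (pos_INR N).
  assert (Hbeta : ((INR N + 1) / r + r * u r t) * (del * (2 * r))
                  = del * (2 * (INR N + 1) + 2 * r * r * u r t)) by (field; lra).
  rewrite Hbeta.
  set (g := INR N * (u r t + v r t) + r * vr r t) in *.
  set (C := 2 * INR N + 4).
  assert (0 <= del * C * t) by (apply Rmult_le_pos; [apply Rmult_le_pos|]; unfold C; lra).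
  assert (0 <= (lam - g - 2 * M) * (del * (1 + r * r) + del * C * t))
    by (apply Rmult_le_pos; [lra| apply Rplus_le_le_0_compat; [apply Rmult_le_pos|]; nra]).
  assert (0 <= del * (r * r) * (M - u r t))
    by (apply Rmult_le_pos; [apply Rmult_le_pos; nra| lra]).
  assert (0 <= M * (del * C * t)) by (apply Rmult_le_pos; lra).
  assert (0 <= M * del) by (apply Rmult_le_pos; lra).
  unfold C in *. lra.
Qed.

Lemma exponential_barrier_supersolution b eps al r t :
  0 < eps -> (INR N + 1) / a + b * M + 2 * lam + 1 <= al -> a <= r <= b -> 0 <= t < T ->
  0 <= 0 - - (eps * al * al * exp (- al * r))
       - ((INR N + 1) / r + r * u r t) * (eps * al * exp (- al * r))
       + (lam - (INR N * (u r t + v r t) + r * vr r t))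
         * (- eps * (exp (- al * r) - exp (- al * b))).
Proof.
  intros Heps Hal Hr Ht.
  destruct (coefficient_bounds r t) as [[_ Hu1] [_ [Hgam1 Hgam2]]]; [split; lra|].
  pose proof bound_nonneg as HM0. pose proof (pos_INR N) as HN.
  assert (HB : 0 <= (INR N + 1) / a + b * M)
    by (apply Rplus_le_le_0_compat; [apply Rdiv_le_0_compat| apply Rmult_le_pos]; lra).
  assert (Hlam : 0 < lam) by (unfold lam; nra).
  pose proof (exp_pos (- al * b)) as HGb.
  set (g := exp (- al * r)). assert (Hg0 : 0 < g) by apply exp_pos.
  assert (HGbg : exp (- al * b) <= g) by (apply exp_le_exp; nra).
  set (beta := (INR N + 1) / r + r * u r t).
  set (gam := INR N * (u r t + v r t) + r * vr r t) in *.
  assert (Hbeta : beta <= (INR N + 1) / a + b * M).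
  { unfold beta. assert ((INR N + 1) / r <= (INR N + 1) / a).
    { unfold Rdiv. apply Rmult_le_compat_l; [lra|]. apply Rinv_le_contravar; lra. }
    assert (r * u r t <= b * M) by nra. lra. }
  (* al - beta >= 2 lam + 1 dominates the reaction term, which is at most 2 lam *)
  assert (H1 : eps * al * g * (2 * lam + 1) <= eps * al * g * (al - beta))
    by (apply Rmult_le_compat_l; [repeat apply Rmult_le_pos|]; lra).
  assert (H2 : (lam - gam) * (eps * (g - exp (- al * b))) <= 2 * lam * (eps * g)).
  { apply Rmult_le_compat; [lra| apply Rmult_le_pos; lra| lra|].
    apply Rmult_le_compat_l; lra. }
  assert (H3 : eps * g * (2 * lam + 1) <= eps * al * g * (2 * lam + 1)).
  { assert (0 <= eps * g * (2 * lam + 1) * (al - 1)) by (repeat apply Rmult_le_pos; lra). nra. }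
  assert (0 < eps * g) by (apply Rmult_lt_0_compat; lra).
  nra.
Qed.

Lemma weak_comparison :
  (forall r, a <= r -> u r 0 <= v r 0) -> (forall t, 0 <= t < T -> u a t <= v a t) ->
  forall r t, dom a T r t -> u r t <= v r t.
Proof.
  intros Hinit Hleft r0 t0 [Hr0 Ht0]. apply Rnot_lt_le. intro Hneg.
  pose proof bound_nonneg as HM0. pose proof (pos_INR N) as HN.
  assert (Hlam : 0 < lam) by (unfold lam; nra).
  set (C := 2 * INR N + 4).
  set (E0 := exp (- lam * t0)).
  assert (HE0 : 0 < E0) by apply exp_pos.
  set (q := 1 + r0 * r0 + C * t0).
  assert (Hq : 0 < q) by (unfold q, C; nra).
  (* the barrier makes up half of the negative weighted value at (r0, t0) *)
  set (del := E0 * (u r0 t0 - v r0 t0) / (2 * q)).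
  assert (Hdel : 0 < del) by (unfold del; apply Rdiv_lt_0_compat; nra).
  set (b := r0 + 1 + 2 * M / del).
  assert (Hr0b : r0 < b /\ 1 <= b).
  { assert (0 <= 2 * M / del) by (apply Rdiv_le_0_compat; lra). unfold b. lra. }
  assert (H2M : 2 * M <= del * b).
  { assert (del * (2 * M / del) = 2 * M) by (field; lra).
    assert (0 <= del * (r0 + 1)) by (apply Rmult_le_pos; lra).
    unfold b. rewrite Rmult_plus_distr_l. lra. }
  assert (Hpsi : forall r t, 0 <= t -> 0 <= del * (1 + r * r) + del * C * t)
    by (intros r t Ht; apply Rplus_le_le_0_compat;
        [apply Rmult_le_pos; nra| apply Rmult_le_pos; [apply Rmult_le_pos|]; unfold C; lra]).
  enough (Hw : 0 <= E0 * (v r0 t0 - u r0 t0) + del * q).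
  { assert (del * q = E0 * (u r0 t0 - v r0 t0) / 2) by (unfold del; field; lra). nra. }
  replace (del * q) with (del * (1 + r0 * r0) + del * C * t0) by (unfold q; ring).
  apply (barrier_comparison b t0 (fun r t => del * (1 + r * r) + del * C * t)
           (fun r _ => del * (2 * r)) (fun _ _ => del * 2) (fun _ _ => del * C));
    [lra| lra| | | | | repeat split; lra].
  - apply cont_on_plus; [apply cont_on_fun_r| apply cont_on_fun_t]; intro x; auto_derive; easy.
  - intros r t _ _. repeat split; apply is_derive_Reals; auto_derive; try easy; ring.
  - intros r t Hr Ht. apply quadratic_barrier_supersolution; [lra| split; lra].
  - intros r t [Hr Ht] Hcase.
    assert (HE : 0 < exp (- lam * t) <= 1).
    { split; [apply exp_pos|]. rewrite <- exp_0. apply exp_le_exp. nra. }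
    destruct (Req_dec r b) as [->|Hrb].
    + destruct (coefficient_bounds b t) as [Hu1 [Hv1 _]]; [split; lra|].
      assert (exp (- lam * t) * (v b t - u b t) >= - 2 * M) by nra.
      assert (del * b <= del * b * b)
        by (rewrite <- (Rmult_1_r (del * b)) at 1; apply Rmult_le_compat_l; nra).
      assert (0 <= del * C * t) by (unfold C; apply Rmult_le_pos; nra).
      nra.
    + assert (u r t <= v r t).
      { destruct Hcase as [->| [->| Hrb']]; [apply Hinit; lra| apply Hleft; lra| lra]. }
      assert (0 <= exp (- lam * t) * (v r t - u r t)) by (apply Rmult_le_pos; lra).
      specialize (Hpsi r t ltac:(lra)). lra.
Qed.

Lemma difference_parabolic_boundary_min b t1 :
  a <= b -> 0 <= t1 < T ->
  (forall r, a <= r -> u r 0 < v r 0) -> (forall t, 0 <= t < T -> u a t < v a t) ->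
  exists mu, 0 < mu /\ (forall r, a <= r <= b -> mu <= v r 0 - u r 0) /\
    (forall t, 0 <= t <= t1 -> mu <= v a t - u a t).
Proof.
  intros Hab Ht1 Hinit Hleft.
  assert (HZ := difference_cont_on b t1 (proj2 Ht1)).
  destruct (rect_min_r a b t1 _ 0 Hab ltac:(lra) HZ) as [rm [Hrm Hmin0]].
  destruct (rect_min_t a b t1 _ a ltac:(lra) ltac:(lra) HZ) as [tm [Htm Hmina]].
  cbv beta in Hmin0, Hmina.
  exists (Rmin (v rm 0 - u rm 0) (v a tm - u a tm)). split; [|split].
  - apply Rmin_pos; [specialize (Hinit rm ltac:(lra))| specialize (Hleft tm ltac:(lra))]; lra.
  - intros r Hr. specialize (Hmin0 r Hr).
    pose proof (Rmin_l (v rm 0 - u rm 0) (v a tm - u a tm)). lra.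
  - intros t Ht. specialize (Hmina t Ht).
    pose proof (Rmin_r (v rm 0 - u rm 0) (v a tm - u a tm)). lra.
Qed.

Lemma strict_comparison :
  (forall r, a <= r -> u r 0 < v r 0) -> (forall t, 0 <= t < T -> u a t < v a t) ->
  forall r t, dom a T r t -> u r t < v r t.
Proof.
  intros Hinit Hleft r0 t0 [Hr0 Ht0].
  assert (Hweak := weak_comparison (fun r Hr => Rlt_le _ _ (Hinit r Hr))
                                   (fun t Ht => Rlt_le _ _ (Hleft t Ht))).
  pose proof bound_nonneg as HM0. pose proof (pos_INR N) as HN.
  assert (Hlam : 0 < lam) by (unfold lam; nra).
  set (b := r0 + 1).
  destruct (difference_parabolic_boundary_min b t0 ltac:(unfold b; lra) ltac:(lra) Hinit Hleft)
    as [mu [Hmu [Hmu0 Hmua]]].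
  set (E0 := exp (- lam * t0)).
  assert (HE0 : 0 < E0 <= 1).
  { split; [apply exp_pos|]. rewrite <- exp_0. apply exp_le_exp. nra. }
  set (eps := E0 * mu).
  assert (Heps : 0 < eps) by (unfold eps; nra).
  set (al := (INR N + 1) / a + b * M + 2 * lam + 1).
  set (Gb := exp (- al * b)).
  assert (HGb : 0 < Gb) by apply exp_pos.
  assert (Hal : 0 < al).
  { assert (0 <= (INR N + 1) / a) by (apply Rdiv_le_0_compat; lra).
    assert (0 <= b * M) by (apply Rmult_le_pos; unfold b; lra). unfold al. lra. }
  assert (Hg : forall r, a <= r -> 0 < exp (- al * r) <= 1).
  { intros r Hr. split; [apply exp_pos|]. rewrite <- exp_0. apply exp_le_exp. nra. }
  enough (Hw : 0 <= E0 * (v r0 t0 - u r0 t0) - eps * (exp (- al * r0) - Gb)).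
  { assert (Gb < exp (- al * r0)).
    { apply exp_increasing. unfold b. nra. }
    assert (0 < eps * (exp (- al * r0) - Gb)) by (apply Rmult_lt_0_compat; lra).
    nra. }
  replace (E0 * (v r0 t0 - u r0 t0) - eps * (exp (- al * r0) - Gb))
    with (E0 * (v r0 t0 - u r0 t0) + - eps * (exp (- al * r0) - Gb)) by ring.
  apply (barrier_comparison b t0 (fun r _ => - eps * (exp (- al * r) - Gb))
           (fun r _ => eps * al * exp (- al * r))
           (fun r _ => - (eps * al * al * exp (- al * r))) (fun _ _ => 0));
    [unfold b; lra| lra| | | | | repeat split; unfold b; lra].
  - apply cont_on_fun_r. intro x. auto_derive. easy.
  - intros r t _ _. repeat split; apply is_derive_Reals; auto_derive; try easy; ring.
  - intros r t Hr Ht. apply exponential_barrier_supersolution; [lra| unfold al; lra| lra| lra].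
  - intros r t [Hr Ht] Hcase.
    destruct (Req_dec r b) as [->|Hrb].
    + unfold Gb. rewrite Rminus_diag, Rmult_0_r, Rplus_0_r.
      apply Rmult_le_pos; [left; apply exp_pos|].
      assert (u b t <= v b t) by (apply Hweak; split; lra). lra.
    + assert (Hexp : eps <= exp (- lam * t) * (v r t - u r t)).
      { destruct Hcase as [->| [->| Hrb']]; [| |lra].
        - rewrite Rmult_0_r, exp_0, Rmult_1_l. specialize (Hmu0 r Hr). unfold eps. nra.
        - assert (E0 <= exp (- lam * t)) by (apply exp_le_exp; nra).
          specialize (Hmua t Ht). unfold eps. nra. }
      specialize (Hg r ltac:(lra)).
      assert (eps * (exp (- al * r) - Gb) <= eps) by nra.
      lra.
Qed.

End TwoSolutions.

Theorem lemma2p2 (N : nat) (a T : R)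
  (u ur urr ut v vr vrr vt : R -> R -> R) :
  (3 <= N)%nat -> 0 < a -> 0 < T ->
  classical_solution N a T u ur urr ut ->
  classical_solution N a T v vr vrr vt ->
  (forall r, a <= r -> u r 0 < v r 0) ->
  (forall t, 0 <= t < T -> u a t < v a t) ->
  (exists M, forall r t, dom a T r t ->
     Rabs (u r t) <= M /\ Rabs (v r t) <= M /\ Rabs (r * vr r t) <= M) ->
  forall r t, dom a T r t -> u r t < v r t.
Proof.
  intros _ Ha HT Hu Hv Hinit Hleft [M HM].
  exact (strict_comparison N a T M u ur urr ut v vr vrr vt Ha HT Hu Hv HM Hinit Hleft).
Qed.
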